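(* Let $n\in\mathbb{N}$, $0\le\alpha\le1$, and let $S\subseteq\mathbb{F}_2^n$ with $|S|\ge\alpha 2^n$. Then there exists $a\in\mathbb{F}_2^n$ such that the translate $S+\{a\}=\{x+a:x\in S\}$ contains a chain $C$ (with respect to the partial order $\le$ below) with $|C|\ge\alpha n$.
   Context: The partial order $\le$ on $\mathbb{F}_2^n$ is coordinatewise: $x\le y$ iff $x_i\le y_i$ (viewing $0<1$) for every coordinate $i$. A chain is a set of pairwise comparable elements. Addition is in $\mathbb{F}_2^n$. *)

From mathcomp Require Import all_boot all_order all_algebra.
Set Implicit Arguments. Unset Strict Implicit. Unset Printing Implicit Defensive.
Import GRing.Theory Num.Theory.
Local Open Scope ring_scope.

(* F_2^n as row vectors over 'F_2; coordinatewise order with 0 < 1. *)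
Definition cle (n : nat) (x y : 'rV['F_2]_n) : bool :=
  [forall i, (val (x ord0 i) <= val (y ord0 i))%N].

Definition is_chain (n : nat) (C : {set 'rV['F_2]_n}) : bool :=
  [forall x in C, forall y in C, cle x y || cle y x].

Definition translate (n : nat) (S : {set 'rV['F_2]_n}) (a : 'rV['F_2]_n) :=
  [set x + a | x in S].

From mathcomp Require Import all_boot all_order all_algebra.
Import Order.TTheory GRing.Theory Num.Theory.
Local Open Scope ring_scope.

(* The n + 1 rows 1..10..0 form a chain.  Each row x lies in S + a for
   exactly |S| of the 2^n translations a, so summed over all a these rows
   meet the translates S + a (n + 1)|S| times, and some translate contains at
   least (n + 1)|S| / 2^n >= alpha (n + 1) of them. *)

Section Averaging.

Variable G : finZmodType.

Lemma translateE (S : {set G}) (a : G) x :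
  (x \in [set y + a | y in S]) = (x - a \in S).
Proof. by rewrite (can_imset_pre _ (addrK a)) inE. Qed.

Lemma sum_card_setI_translate (A S : {set G}) :
  (\sum_(a : G) #|A :&: [set (y + a)%R | y in S]| = #|A| * #|S|)%N.
Proof.
transitivity (\sum_(a : G) \sum_(x in A) nat_of_bool ((x - a)%R \in S))%N.
  apply: eq_bigr => a _; rewrite -sum1_card big_mkcond [RHS]big_mkcond /=.
  by apply: eq_bigr => x _; rewrite inE translateE; case: (x \in A).
rewrite exchange_big -sum_nat_const; apply: eq_bigr => x _.
rewrite (reindex_inj (can_inj (subKr x))) /=.
under eq_bigr do rewrite subKr.
by rewrite -big_mkcond /= sum1_card.
Qed.

End Averaging.

Lemma exists_ge_mean {I : finType} (i0 : I) (F : I -> nat) :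
  exists i, (\sum_j F j <= #|I| * F i)%N.
Proof.
exists [arg max_(i > i0) F i]; case: arg_maxnP => // i _ maxF.
by rewrite -sum_nat_const leq_sum // => j _; apply: maxF.
Qed.

Lemma ler_mean_bound (R : realFieldType) (alpha : R) (m k s c : nat) :
  (0 < m)%N -> 0 <= alpha -> alpha * m%:R <= s%:R -> (k * s <= m * c)%N ->
  alpha * k%:R <= c%:R.
Proof.
move=> m_gt0 alpha_ge0 alpha_m_le_s ks_le_mc.
have m_pos : 0 < m%:R :> R by rewrite ltr0n.
rewrite -(ler_pM2r m_pos) -natrM.
apply: le_trans (_ : (k * s)%:R <= _); last by rewrite ler_nat (mulnC c).
by rewrite mulrAC natrM mulrC ler_wpM2l.
Qed.

Definition prefix_row n k : 'rV['F_2]_n := \row_i (if (i < k)%N then 1 else 0).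

Lemma val_prefix_row n k i : val (prefix_row n k ord0 i) = (i < k)%N.
Proof. by rewrite mxE; case: ifP. Qed.

Lemma cle_prefix_row {n j k : nat} :
  (j <= k)%N -> cle (prefix_row n j) (prefix_row n k).
Proof.
move=> jk; apply/forallP => i; rewrite !val_prefix_row.
by case: (ltnP i j) => // ij; rewrite (leq_trans ij jk).
Qed.

Lemma prefix_row_neq {n j k : nat} :
  (j < k <= n)%N -> prefix_row n j != prefix_row n k.
Proof.
case/andP=> jk kn; have jn : (j < n)%N := leq_trans jk kn.
apply/eqP => /(congr1 (fun x : 'rV_n => val (x ord0 (Ordinal jn)))).
by rewrite !val_prefix_row /= ltnn jk.
Qed.

Lemma prefix_row_inj n : injective (fun k : 'I_n.+1 => prefix_row n k).
Proof.
move=> j k /= ejk; apply/val_inj.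
case: (ltngtP j k) => // [jk|kj]; [move: ejk | move: ejk => /esym];
  by move/eqP; rewrite (negPf (prefix_row_neq _)) // ?jk ?kj -ltnS ltn_ord.
Qed.

Definition prefix_rows n : {set 'rV['F_2]_n} :=
  [set prefix_row n k | k : 'I_n.+1].

Lemma card_prefix_rows n : #|prefix_rows n| = n.+1.
Proof. by rewrite card_imset ?card_ord //; apply: prefix_row_inj. Qed.

Lemma is_chain_prefix_rows n : is_chain (prefix_rows n).
Proof.
apply/forall_inP => _ /imsetP[j _ ->]; apply/forall_inP => _ /imsetP[k _ ->].
by case: (leqP j k) => [jk | /ltnW kj];
  rewrite ?(cle_prefix_row jk) ?(cle_prefix_row kj) ?orbT.
Qed.

Lemma is_chainS n (C D : {set 'rV['F_2]_n}) :
  C \subset D -> is_chain D -> is_chain C.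
Proof.
move=> /subsetP sCD /forall_inP chainD; apply/forall_inP => x /sCD /chainD.
by move=> /forall_inP chainDx; apply/forall_inP => y /sCD /chainDx.
Qed.

Theorem lemma4p3 (R : realFieldType) (n : nat) (alpha : R)
  (S : {set 'rV['F_2]_n}) :
  0 <= alpha -> alpha <= 1 -> alpha * (2 ^+ n) <= (#|S|)%:R ->
  exists a : 'rV['F_2]_n, exists C : {set 'rV['F_2]_n},
    [/\ C \subset translate S a, is_chain C & alpha * n%:R <= (#|C|)%:R].
Proof.
move=> alpha_ge0 _ alphaS.
pose C a := prefix_rows n :&: translate S a.
have [a meanC] := exists_ge_mean 0 (fun a => #|C a|).
rewrite sum_card_setI_translate card_prefix_rows card_mx card_Fp // mul1n in meanC.
exists a, (C a); split; first exact: subsetIr.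
  exact: is_chainS (subsetIl _ _) (is_chain_prefix_rows n).
apply: le_trans (_ : alpha * n.+1%:R <= _); first by rewrite ler_wpM2l ?ler_nat.
by apply: ler_mean_bound meanC; rewrite ?expn_gt0 ?natrX.
Qed.
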